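(* Let $f(x):=x^n+a_1x^{n-1}+a_2x^{n-2}+\cdots+a_n$ be a real polynomial with roots $r,x_2,x_3,\ldots,x_n$, where $r$ is real and $\mathrm{Re}(x_j)\le 0$ for $j=2,3,\ldots,n$. Then: (i) Let $t$ be the largest integer such that $a_{2t}\ne0$. Then either $a_{2j}>0$ for all $j=1,2,\ldots,t$, or there exists $s\in\{1,2,\ldots,t\}$ such that $a_{2j}>0$ for $j=1,\ldots,s-1$, $a_{2s}\le 0$, and $a_{2j}<0$ for $j=s+1,\ldots,t$. (ii) Let $t'$ be the largest integer such that $a_{2t'-1}\ne0$. Then either $a_{2j-1}>0$ for all $j=1,2,\ldots,t'$, or there exists $s'\in\{1,2,\ldots,t'\}$ such that $a_{2j-1}>0$ for $j=1,\ldots,s'-1$, $a_{2s'-1}\le 0$, and $a_{2j-1}<0$ for $j=s'+1,\ldots,t'$. *)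

From HB Require Import structures.
From mathcomp Require Import all_boot all_order all_algebra.
From mathcomp Require Import complex.
From mathcomp Require Import reals.
Set Implicit Arguments. Unset Strict Implicit. Unset Printing Implicit Defensive.
Import Order.TTheory GRing.Theory Num.Theory.
Local Open Scope ring_scope.

(* Coefficient a_k of f(x) = x^n + a_1 x^(n-1) + ... + a_n, i.e. the
   coefficient of x^(n-k); by convention a_k = 0 for k > n. *)
Definition coef_a (R : nzRingType) (n : nat) (f : {poly R}) (k : nat) : R :=
  if (k <= n)%N then f`_(n - k) else 0.

From HB Require Import structures.
From mathcomp Require Import all_boot all_order all_algebra.
From mathcomp Require Import complex.
From mathcomp Require Import reals.
From mathcomp Require Import zify ring lra.
Import Order.TTheory GRing.Theory Num.Theory.
Set Implicit Arguments. Unset Strict Implicit. Unset Printing Implicit Defensive.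
Local Open Scope ring_scope.

(* Write f = h (x - r).  Over the reals h = H K, where H is a product of factors
   x + a and x^2 + b x + c with a, b, c > 0 and K a product of factors x and
   x^2 + s with s > 0.  The coefficients c_i of H are positive up to its degree,
   every minor c_(P+d) c_Q - c_P c_(Q+d) with d >= 0 and Q - P even and
   nonnegative is nonnegative, and the consecutive minors
   c_(P+1) c_(P+2) - c_P c_(P+3) are positive: multiplying by a factor of H
   expands such a minor into a nonnegative combination of minors of the same
   kind.  Positivity of the consecutive minors shows that in H (x - r) a
   coefficient a_k <= 0 forces a_(k+2) < 0 unless all later coefficients of that
   parity vanish.  Multiplying by x leaves the sequence a_k unchanged and
   multiplying by x^2 + s turns it into a_k + s a_(k-2); both preserve this
   property, which is exactly the claimed sign pattern. *)

Definition coefz (R : nzRingType) (p : {poly R}) (i : int) : R :=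
  if i is Posz n then p`_n else 0.

Lemma coefz_neg (R : nzRingType) (p : {poly R}) i : i < 0 -> coefz p i = 0.
Proof. by case: i. Qed.

Lemma coefz_ge_size (R : nzRingType) (p : {poly R}) i :
  (size p)%:Z <= i -> coefz p i = 0.
Proof. by case: i => //= n hn; rewrite nth_default. Qed.

Lemma coefz1 (R : nzRingType) i : coefz (1 : {poly R}) i = (i == 0)%:R.
Proof. by case: i => [[|n]|n] //=; rewrite coef1. Qed.

Lemma coefz_mul_quad (R : comNzRingType) (p : {poly R}) (w0 w1 w2 : R) i :
  coefz (p * (w2 *: 'X^2 + w1 *: 'X + w0%:P)) i
  = w0 * coefz p i + w1 * coefz p (i - 1) + w2 * coefz p (i - 2).
Proof.
case: i => [n|n]; last by rewrite /= !mulr0 !addr0.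
rewrite /= -!mul_polyC !mulrDr !coefD !mulrA !coefMX !coefMC.
case: n => [|[|n]] /=.
- by rewrite !mulr0 !add0r !addr0 mulrC.
- by rewrite subnn mulr0 addr0 add0r; ring.
- by rewrite !subSS !subn0; ring.
Qed.

Definition minor (R : comPzRingType) (c : int -> R) (P Q d : int) : R :=
  c (P + d) * c Q - c P * c (Q + d).

(* The cross terms, whose gaps Q - P +- 1 are odd, are regrouped in pairs
   whose sums are minors with even gap. *)
Lemma minor_conv (R : comPzRingType) (c c' : int -> R) (w0 w1 w2 : R) P Q d :
  (forall i, c' i = w0 * c i + w1 * c (i - 1) + w2 * c (i - 2)) ->
  minor c' P Q d =
    w0 ^+ 2 * minor c P Q d + w1 ^+ 2 * minor c (P - 1) (Q - 1) d
    + w2 ^+ 2 * minor c (P - 2) (Q - 2) d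
    + w0 * w1 * (minor c (P - 1) (Q - 1) (d + 1) + minor c P Q (d - 1))
    + w1 * w2 * minor c (P - 2) (Q - 2) (d + 1)
    + w1 * w2 * minor c (P - 1) (Q - 1) (d - 1)
    + w0 * w2 * (minor c P (Q - 2) d + minor c (P - 2) Q d).
Proof.
move=> c'E; rewrite /minor !c'E.
(* [ring] treats each [c _] as an atom, so the indices are first normalized. *)
have sh1 X : X - 1 + d = X + d - 1 by ring.
have sh2 X : X - 2 + d = X + d - 2 by ring.
have sh3 X : X - 1 + (d + 1) = X + d by ring.
have sh4 X : X + (d - 1) = X + d - 1 by ring.
have sh5 X : X - 2 + (d + 1) = X + d - 1 by ring.
have sh6 X : X - 1 + (d - 1) = X + d - 2 by ring.
by rewrite !sh3 !sh5 !sh6 !sh4 !sh1 !sh2; ring.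
Qed.

Section EvenMinors.

Variable R : realFieldType.
Implicit Types c : int -> R.

Definition even_minors_ge0 c :=
  forall P Q d e : int, 0 <= d -> 0 <= e -> Q = P + 2 * e -> 0 <= minor c P Q d.

Variables (c c' : int -> R) (w0 w1 w2 : R).
Hypotheses (w0_ge0 : 0 <= w0) (w1_ge0 : 0 <= w1) (w2_ge0 : 0 <= w2).
Hypothesis c'E : forall i, c' i = w0 * c i + w1 * c (i - 1) + w2 * c (i - 2).
Hypothesis c_minors : even_minors_ge0 c.

Lemma minor_conv_ge P Q d e : 1 <= d -> 1 <= e -> Q = P + 2 * e ->
  w1 ^+ 2 * minor c (P - 1) (Q - 1) d + w2 ^+ 2 * minor c (P - 2) (Q - 2) d
  + w1 * w2 * minor c (P - 2) (Q - 2) (d + 1) <= minor c' P Q d.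
Proof.
move=> d_ge1 e_ge1 QE; rewrite (minor_conv _ _ _ c'E).
suff : 0 <= w0 ^+ 2 * minor c P Q d
  + w0 * w1 * minor c (P - 1) (Q - 1) (d + 1) + w0 * w1 * minor c P Q (d - 1)
  + w1 * w2 * minor c (P - 1) (Q - 1) (d - 1)
  + w0 * w2 * minor c P (Q - 2) d + w0 * w2 * minor c (P - 2) Q d by lra.
by rewrite !addr_ge0 ?mulr_ge0 ?sqr_ge0 //;
  first [ apply: (c_minors (e := e)); lia
        | apply: (c_minors (e := e - 1)); lia
        | apply: (c_minors (e := e + 1)); lia ].
Qed.

Lemma even_minors_ge0_conv : even_minors_ge0 c'.
Proof.
move=> P Q d e d_ge0 e_ge0 QE.
have [->|d_neq0] := eqVneq d 0; first by rewrite /minor !addr0 subrr.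
have [e0|e_neq0] := eqVneq e 0.
  by rewrite QE e0 mulr0 addr0 /minor mulrC subrr.
apply: le_trans (minor_conv_ge (e := e) _ _ QE); try lia.
by rewrite !addr_ge0 ?mulr_ge0 ?sqr_ge0 //; apply: (c_minors (e := e)); lia.
Qed.

End EvenMinors.

Section HurwitzCoefs.

Variable R : realFieldType.
Implicit Types p : {poly R}.

Record hurwitz_coefs p : Prop := HurwitzCoefs {
  hurwitz_ge0 : forall i, 0 <= coefz p i;
  hurwitz_gt0 : forall i, 0 <= i <= ((size p).-1)%:Z -> 0 < coefz p i;
  hurwitz_minors : even_minors_ge0 (coefz p);
  hurwitz_step_minor : forall P, -1 <= P -> P + 2 <= ((size p).-1)%:Z ->
    0 < minor (coefz p) P (P + 2) 1 }.

Lemma hurwitz_coefs1 : hurwitz_coefs 1.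
Proof.
split; rewrite ?size_poly1.
- by move=> i; rewrite coefz1; case: eqP.
- by move=> i i_0; rewrite coefz1 (_ : i == 0) //; lia.
- move=> P Q d e d_ge0 e_ge0 ->; rewrite /minor !coefz1.
  by do 4 case: eqP; rewrite /= ?mulr1 ?mulr0 ?subr0 ?subrr //; lia.
- by move=> P; lia.
Qed.

Lemma hurwitz_coefs_neq0 p : hurwitz_coefs p -> p != 0.
Proof.
move=> hp; have c0_gt0 : 0 < coefz p 0 by apply: (hurwitz_gt0 hp); lia.
by apply: contraTneq c0_gt0 => ->; rewrite /= coef0 ltxx.
Qed.

Section MulQuad.

Variables (p : {poly R}) (w0 w1 w2 : R).
Hypotheses (hp : hurwitz_coefs p) (w0_gt0 : 0 < w0) (w1_gt0 : 0 < w1) (w2_ge0 : 0 <= w2).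
Let q := w2 *: 'X^2 + w1 *: 'X + w0%:P.
Local Notation N := ((size p).-1)%:Z.
Let c'E i :
  coefz (p * q) i = w0 * coefz p i + w1 * coefz p (i - 1) + w2 * coefz p (i - 2).
Proof. exact: coefz_mul_quad. Qed.

Let size_p : (size p)%:Z = N + 1.
Proof.
by have := hurwitz_coefs_neq0 hp; rewrite -size_poly_gt0; lia.
Qed.

Let coef_vanish i : N < i -> coefz p i = 0.
Proof. by move=> i_gt; apply: coefz_ge_size; rewrite size_p; lia. Qed.

Let deg_le : ((size (p * q)).-1)%:Z <= N + 2.
Proof.
suff : (size (p * q)%R <= (size p).+2)%N by lia.
apply/leq_sizeP => j j_ge; change (coefz (p * q) j = 0).
by rewrite c'E !coef_vanish ?mulr0 ?addr0 //; lia.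
Qed.

Let w2_gt0_of_deg : N + 2 <= ((size (p * q)).-1)%:Z -> 0 < w2.
Proof.
rewrite lt_def w2_ge0 andbT; apply: contraTneq => w2_0.
suff : (size (p * q)%R <= (size p).+1)%N by lia.
apply/leq_sizeP => j j_ge; change (coefz (p * q) j = 0).
by rewrite c'E w2_0 mul0r addr0 !coef_vanish ?mulr0 ?addr0 //; lia.
Qed.

Let coef_mul_gt0 i : 0 <= i <= ((size (p * q)).-1)%:Z -> 0 < coefz (p * q) i.
Proof.
move=> /andP[i_ge0 i_le]; rewrite c'E.
have := mulr_ge0 (ltW w0_gt0) (hurwitz_ge0 hp i).
have := mulr_ge0 (ltW w1_gt0) (hurwitz_ge0 hp (i - 1)).
have := mulr_ge0 w2_ge0 (hurwitz_ge0 hp (i - 2)).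
have [i_le_N|N_lt_i] := lerP i N.
  have : 0 < w0 * coefz p i by rewrite mulr_gt0 ?(hurwitz_gt0 hp) ?i_ge0.
  lra.
have [i_le_N1|N1_lt_i] := lerP i (N + 1).
  have : 0 < w1 * coefz p (i - 1) by rewrite mulr_gt0 ?(hurwitz_gt0 hp) //; lia.
  lra.
have : 0 < w2 * coefz p (i - 2).
  by rewrite mulr_gt0 ?w2_gt0_of_deg ?(hurwitz_gt0 hp) //; lia.
lra.
Qed.

Let mul_step_minor_gt0 P : -1 <= P -> P + 2 <= ((size (p * q)).-1)%:Z ->
  0 < minor (coefz (p * q)) P (P + 2) 1.
Proof.
move=> P_ge P_le; have c_minors := hurwitz_minors hp.
have [->|P_neq] := eqVneq P (-1).
  rewrite /minor (coefz_neg (p * q) (_ : -1 < 0)) // mul0r subr0.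
  by rewrite mulr_gt0 ?coef_mul_gt0 //; lia.
apply: lt_le_trans (minor_conv_ge (ltW w0_gt0) (ltW w1_gt0) w2_ge0 c'E c_minors
  (e := 1) _ _ (erefl (P + 2 * 1))) => //; rewrite mulr1.
have m1_ge0 : 0 <= minor (coefz p) (P - 1) (P + 2 - 1) 1.
  by apply: (c_minors _ _ _ 1); lia.
have m2_ge0 : 0 <= minor (coefz p) (P - 2) (P + 2 - 2) 1.
  by apply: (c_minors _ _ _ 1); lia.
have m3_ge0 : 0 <= minor (coefz p) (P - 2) (P + 2 - 2) (1 + 1).
  by apply: (c_minors _ _ _ 1); lia.
have w12_ge0 : 0 <= w1 * w2 by rewrite mulr_ge0 // ltW.
have := mulr_ge0 (sqr_ge0 w1) m1_ge0; have := mulr_ge0 (sqr_ge0 w2) m2_ge0.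
have := mulr_ge0 w12_ge0 m3_ge0.
have [w2_gt0|w2_le0] := ltrP 0 w2; last first.
  have deg_lt : ((size (p * q)).-1)%:Z < N + 2.
    by rewrite ltNge; apply: contraTN w2_le0 => /w2_gt0_of_deg; rewrite -ltNge.
  have : 0 < minor (coefz p) (P - 1) (P + 2 - 1) 1.
    by rewrite (_ : P + 2 - 1 = P - 1 + 2); [apply: (hurwitz_step_minor hp) | ]; lia.
  have := exprn_gt0 2 w1_gt0; nra.
have [P0|P_neq0] := eqVneq P 0.
  have : 0 < minor (coefz p) (P - 2) (P + 2 - 2) (1 + 1).
    rewrite P0 /minor (coefz_neg p (_ : 0 - 2 < 0)) // mul0r subr0.
    by apply: mulr_gt0; apply: (hurwitz_gt0 hp); lia.
  have := mulr_gt0 w1_gt0 w2_gt0; nra.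
have : 0 < minor (coefz p) (P - 2) (P + 2 - 2) 1.
  by rewrite (_ : P + 2 - 2 = P - 2 + 2); [apply: (hurwitz_step_minor hp) | ]; lia.
have := exprn_gt0 2 w2_gt0; nra.
Qed.

Lemma hurwitz_coefs_mul : hurwitz_coefs (p * q).
Proof.
split.
- by move=> i; rewrite c'E !addr_ge0 ?mulr_ge0 ?(hurwitz_ge0 hp) //; apply: ltW.
- exact: coef_mul_gt0.
- exact: even_minors_ge0_conv (ltW w0_gt0) (ltW w1_gt0) w2_ge0 c'E (hurwitz_minors hp).
- exact: mul_step_minor_gt0.
Qed.

End MulQuad.
End HurwitzCoefs.

Section Persistence.

Variable R : realFieldType.
Implicit Types (F H K : {poly R}) (v w : int -> R).

Definition coef_rev F (k : int) : R := coefz F (((size F).-1)%:Z - k).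

Definition nonpos_persistent v :=
  forall k, 0 <= k -> v k <= 0 ->
  v (k + 2) < 0 \/ forall m, 0 <= m -> v (k + 2 * m + 2) = 0.

Lemma nonpos_persistent_shift v w (s : R) : 0 <= s -> (forall k, k < 0 -> v k = 0) ->
  (forall k, w k = v k + s * v (k - 2)) ->
  nonpos_persistent v -> nonpos_persistent w.
Proof.
move=> s_ge0 v_neg wE hv k k_ge0; rewrite !wE addrK => wk_le0.
have [vk_le0|vk_gt0] := lerP (v k) 0.
  have svk_le0 : s * v k <= 0 by rewrite mulr_ge0_le0.
  case: (hv k k_ge0 vk_le0) => [vk2_lt0|v_tail]; first by left; lra.
  have vk2_0 : v (k + 2) = 0 by have := v_tail 0 (lexx _); rewrite mulr0 addr0.
  rewrite vk2_0 add0r.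
  have [svk_lt0|svk_ge0] := ltrP (s * v k) 0; [by left | right => m m_ge0].
  have [->|m_neq0] := eqVneq m 0; first by rewrite mulr0 addr0 wE addrK vk2_0; lra.
  rewrite wE v_tail // (_ : k + 2 * m + 2 - 2 = k + 2 * (m - 1) + 2); last by ring.
  by rewrite v_tail ?mulr0 ?addr0 //; lia.
have vk2_lt0 : v (k - 2) < 0.
  by rewrite ltNge; apply: contraTN wk_le0 => /(mulr_ge0 s_ge0) svk2; rewrite -ltNge; lra.
have k2_ge0 : 0 <= k - 2.
  by rewrite leNgt; apply: contraTN vk2_lt0 => /v_neg ->; rewrite ltxx.
by case: (hv _ k2_ge0 (ltW vk2_lt0)) => [|/(_ 0 (lexx _))];
  rewrite ?mulr0 ?addr0 subrK; lra.
Qed.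

Lemma coef_rev_neg F k : k < 0 -> coef_rev F k = 0.
Proof. by move=> k_lt0; apply: coefz_ge_size; set n := size F; lia. Qed.

Lemma coef_rev_mulX F k : F != 0 -> coef_rev (F * 'X) k = coef_rev F k.
Proof.
move=> F_neq0; have F_size : (0 < size F)%N by rewrite size_poly_gt0.
rewrite /coef_rev size_mulX //=.
have -> : 'X = 0 *: 'X^2 + 1 *: 'X + 0%:P :> {poly R}.
  by rewrite scale0r add0r scale1r addr0.
by rewrite coefz_mul_quad !mul0r addr0 add0r mul1r; congr coefz; set n := size F; lia.
Qed.

Lemma coef_rev_mulX2addC F (s : R) k : F != 0 ->
  coef_rev (F * ('X^2 + s%:P)) k = coef_rev F k + s * coef_rev F (k - 2).
Proof.
move=> F_neq0; have F_size : (0 < size F)%N by rewrite size_poly_gt0.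
rewrite /coef_rev size_Mmonic ?monicXnaddC ?size_XnaddC //.
have -> : 'X^2 + s%:P = 1 *: 'X^2 + 0 *: 'X + s%:P by rewrite scale1r scale0r addr0.
rewrite coefz_mul_quad mul0r addr0 mul1r addrC.
by congr (coefz F _ + _ * coefz F _); set n := size F; lia.
Qed.

Lemma coef_rev_mulXsubC F (r : R) k : F != 0 ->
  coef_rev (F * ('X - r%:P)) k = coef_rev F k - r * coef_rev F (k - 1).
Proof.
move=> F_neq0; have F_size : (0 < size F)%N by rewrite size_poly_gt0.
rewrite /coef_rev size_Mmonic ?monicXsubC // size_XsubC.
have -> : 'X - r%:P = 0 *: 'X^2 + 1 *: 'X + (- r)%:P.
  by rewrite scale0r add0r scale1r polyCN.
rewrite coefz_mul_quad mul0r addr0 mul1r mulNr addrC.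
by congr (coefz F _ - _ * coefz F _); set n := size F; lia.
Qed.

Inductive imaginary_rooted : {poly R} -> Prop :=
  | imaginary_rooted1 : imaginary_rooted 1
  | imaginary_rootedXM K : imaginary_rooted K -> imaginary_rooted ('X * K)
  | imaginary_rootedX2addCM (s : R) K :
      0 < s -> imaginary_rooted K -> imaginary_rooted (('X^2 + s%:P) * K).

Lemma nonpos_persistent_mul_imaginary F K : imaginary_rooted K -> F != 0 ->
  nonpos_persistent (coef_rev F) -> nonpos_persistent (coef_rev (F * K)).
Proof.
move=> hK; elim: hK F => [|K0 _ IH|s K0 s_gt0 _ IH] F F_neq0 hF; first by rewrite mulr1.
- rewrite mulrA; apply: IH; first by rewrite mulf_neq0 ?polyX_eq0.
  apply: nonpos_persistent_shift (lexx (0 : R)) (coef_rev_neg F) _ hF => k.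
  by rewrite coef_rev_mulX // mul0r addr0.
- rewrite mulrA; apply: IH; first by rewrite mulf_neq0 // monic_neq0 // monicXnaddC.
  apply: nonpos_persistent_shift (ltW s_gt0) (coef_rev_neg F) _ hF => k.
  exact: coef_rev_mulX2addC.
Qed.

Lemma nonpos_persistent_mulXsubC H (r : R) :
  hurwitz_coefs H -> nonpos_persistent (coef_rev (H * ('X - r%:P))).
Proof.
move=> hH; set c := coefz H; set N : int := ((size H).-1)%:Z.
have c_gt0 i : 0 <= i <= N -> 0 < c i := hurwitz_gt0 hH (i := i).
have c_vanish i : i < 0 \/ N < i -> c i = 0.
  case=> i_lt; first exact: coefz_neg.
  by apply: coefz_ge_size; move: i_lt; rewrite /N; set n := size H; lia.
have aE k : coef_rev (H * ('X - r%:P)) k = c (N - k) - r * c (N - k + 1).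
  rewrite coef_rev_mulXsubC ?hurwitz_coefs_neq0 // /coef_rev -/c -/N.
  by rewrite (_ : N - (k - 1) = N - k + 1) //; ring.
move=> k k_ge0; rewrite aE => ak_le0.
have [N_le_k|k_lt_N] := lerP N k.
  by right=> m m_ge0; rewrite aE !c_vanish ?mulr0 ?subr0 //; left; lia.
have c_ge0 i : 0 <= c i := hurwitz_ge0 hH i.
have cNk_gt0 : 0 < c (N - k) by apply: c_gt0; lia.
have [r_le0|r_gt0] := lerP r 0.
  by have := mulr_le0_ge0 r_le0 (c_ge0 (N - k + 1)); lra.
have [k0|k_neq0] := eqVneq k 0.
  move: ak_le0 cNk_gt0; rewrite k0 subr0 (c_vanish (N + 1)) ?mulr0 ?subr0.
    lra.
  by right; lia.
left; rewrite aE; have [kN1|k_neq] := eqVneq k (N - 1).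
  rewrite kN1 (c_vanish (N - (N - 1 + 2))); last by left; lia.
  rewrite (_ : N - (N - 1 + 2) + 1 = 0); last by ring.
  have c0_gt0 : 0 < c 0 by apply: c_gt0; lia.
  by rewrite sub0r oppr_lt0 mulr_gt0.
have step : 0 < c (N - (k + 2) + 1) * c (N - k) - c (N - (k + 2)) * c (N - k + 1).
  have := hurwitz_step_minor hH (P := N - (k + 2)).
  by rewrite /minor -/c (_ : N - (k + 2) + 2 = N - k); [apply | ..]; lia.
have cNk1_gt0 : 0 < c (N - k + 1) by apply: c_gt0; lia.
have := c_ge0 (N - (k + 2) + 1); nra.
Qed.

End Persistence.

Section Factorization.

Variable R : rcfType.
Local Notation toC := (real_complex R).
Implicit Types (h : {poly R}) (z : R[i]).

Lemma root_map_conjc h z : root (map_poly toC h) z -> root (map_poly toC h) z^*%C.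
Proof.
rewrite -complex_root_conj -map_poly_comp (eq_map_poly (g := toC)) // => x /=.
exact: conjc_real.
Qed.

Definition conj_quad z : {poly R} :=
  'X^2 + (-2 * complex.Re z) *: 'X + (complex.Re z ^+ 2 + complex.Im z ^+ 2)%:P.

Lemma map_conj_quad z : map_poly toC (conj_quad z) = ('X - z%:P) * ('X - z^*%:P).
Proof.
have sumE : toC (-2 * complex.Re z) = - (z + z^*%C).
  case: (z) => x y; apply/eqP; rewrite eq_complex /=.
  by apply/andP; split; apply/eqP; ring.
have prodE : toC (complex.Re z ^+ 2 + complex.Im z ^+ 2) = z * z^*%C.
  case: (z) => x y; apply/eqP; rewrite eq_complex /=.
  by apply/andP; split; apply/eqP; ring.
rewrite /conj_quad rmorphD rmorphD /= map_polyXn map_polyZ map_polyX map_polyC /=.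
rewrite sumE prodE.
by rewrite -mul_polyC polyCN polyCD polyCM; ring.
Qed.

Lemma conj_quad_dvdp h z :
  complex.Im z != 0 -> root (map_poly toC h) z -> conj_quad z %| h.
Proof.
move=> Im_neq0 hz; rewrite -(dvdp_map toC) map_conj_quad.
set hC := map_poly toC h in hz *.
have conj_neq : z^*%C != z.
  by apply: contra Im_neq0; case: z {hz} => x y; rewrite eq_complex /= eqxx => /eqP; lra.
have /divpK hE : ('X - z%:P) %| hC by rewrite -root_factor_theorem.
have : root (hC %/ ('X - z%:P)) z^*%C.
  move: (root_map_conjc hz); rewrite -/hC -{1}hE rootM root_XsubC.
  by rewrite (negbTE conj_neq) orbF.
rewrite root_factor_theorem => /divpK qE.
by rewrite -hE -qE -mulrA [_ * ('X - z%:P)]mulrC dvdp_mulIr.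
Qed.

Lemma conj_quad_monic z : conj_quad z \is monic.
Proof. by rewrite -(map_monic toC) map_conj_quad monicMl ?monicXsubC. Qed.

Lemma size_conj_quad z : size (conj_quad z) = 3.
Proof.
by rewrite -(size_map_poly toC) map_conj_quad size_mul ?polyXsubC_eq0 // !size_XsubC.
Qed.

Definition hurwitz_times_imaginary h :=
  exists H K, [/\ h = H * K, hurwitz_coefs H & imaginary_rooted K].

Lemma hurwitz_times_imaginaryMXsubC h (a : R) : a <= 0 ->
  hurwitz_times_imaginary h -> hurwitz_times_imaginary (h * ('X - a%:P)).
Proof.
move=> a_le0 [H [K [-> hH hK]]].
have [->|a_neq0] := eqVneq a 0.
  exists H, ('X * K); split => //; last exact: imaginary_rootedXM.
  by rewrite subr0 -mulrA [K * _]mulrC.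
exists (H * ('X - a%:P)), K; split => //; first by rewrite mulrAC.
have -> : 'X - a%:P = 0 *: 'X^2 + 1 *: 'X + (- a)%:P.
  by rewrite scale0r add0r scale1r polyCN.
by apply: hurwitz_coefs_mul; rewrite // oppr_gt0 lt_neqAle a_neq0.
Qed.

Lemma hurwitz_times_imaginaryM_conj_quad h z :
  complex.Re z <= 0 -> complex.Im z != 0 ->
  hurwitz_times_imaginary h -> hurwitz_times_imaginary (h * conj_quad z).
Proof.
move=> Re_le0 Im_neq0 [H [K [-> hH hK]]].
have Im2_gt0 : 0 < complex.Im z ^+ 2 by rewrite exprn_even_gt0.
have [Re0|Re_neq0] := eqVneq (complex.Re z) 0.
  exists H, (('X^2 + (complex.Im z ^+ 2)%:P) * K); split.
  - by rewrite /conj_quad Re0 mulr0 scale0r addr0 expr0n /= add0r -mulrA [K * _]mulrC.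
  - exact: hH.
  - exact: imaginary_rootedX2addCM.
exists (H * conj_quad z), K; split => //; first by rewrite mulrAC.
rewrite /conj_quad -[X in X + _ + _]scale1r; apply: hurwitz_coefs_mul => //.
- by rewrite ltr_wpDl ?sqr_ge0.
- by move: Re_le0; rewrite le_eqVlt (negbTE Re_neq0) /=; nra.
Qed.

Lemma hurwitz_times_imaginary_factor h : h \is monic ->
  (forall z, root (map_poly toC h) z -> complex.Re z <= 0) ->
  hurwitz_times_imaginary h.
Proof.
have [n] := ubnP (size h); elim: n h => // n IH h size_h h_monic h_roots.
have [h_size1|h_size] := eqVneq (size h) 1.
  have /size_poly1P[c _ hE] : size h == 1 by apply/eqP.
  move: h_monic; rewrite hE monicE lead_coefC => /eqP ->.
  exists 1, 1; split; rewrite ?mulr1 //.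
    exact: hurwitz_coefs1.
  exact: imaginary_rooted1.
have IHd d : d \is monic -> (1 < size d)%N -> d %| h ->
    (forall g, hurwitz_times_imaginary g -> hurwitz_times_imaginary (g * d)) ->
    hurwitz_times_imaginary h.
  move=> d_monic d_size /divpK hE muld; rewrite -hE; apply: muld.
  have g_monic : h %/ d \is monic by rewrite -(monicMr _ d_monic) hE.
  apply: IH => // [|z gz].
    move: size_h; rewrite -{1}hE size_Mmonic ?monic_neq0 //.
    by set a := size (h %/ d); set b := size d; lia.
  by apply: h_roots; rewrite -hE rmorphM rootM gz.
have [z hz] : exists z, root (map_poly toC h) z.
  by apply/closed_rootP; rewrite size_map_poly.
have Re_le0 := h_roots z hz.
have [Im0|Im_neq0] := eqVneq (complex.Im z) 0.
  apply: (IHd ('X - (complex.Re z)%:P)).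
  - exact: monicXsubC.
  - by rewrite size_XsubC.
  - rewrite -root_factor_theorem; move: hz.
    by rewrite [z]complexE Im0 mulr0 addr0 /root horner_map fmorph_eq0.
  by move=> g; apply: hurwitz_times_imaginaryMXsubC.
apply: (IHd (conj_quad z)).
- exact: conj_quad_monic.
- by rewrite size_conj_quad.
- exact: conj_quad_dvdp.
by move=> g; apply: hurwitz_times_imaginaryM_conj_quad.
Qed.

Lemma real_root_cofactor (f : {poly R}) (r : R) m (x : 'I_m -> R[i]) :
  f \is monic ->
  map_poly toC f = ('X - (toC r)%:P) * \prod_(j < m) ('X - (x j)%:P) ->
  (forall j, complex.Re (x j) <= 0) ->
  exists h, [/\ f = h * ('X - r%:P), h \is monic &
    forall z, root (map_poly toC h) z -> complex.Re z <= 0].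
Proof.
move=> f_monic fE x_Re.
have r_root : root f r.
  have : root (map_poly toC f) (toC r).
    by rewrite /root fE hornerM hornerXsubC subrr mul0r.
  by rewrite /root horner_map fmorph_eq0.
have /divpK hE : 'X - r%:P %| f by rewrite -root_factor_theorem.
exists (f %/ ('X - r%:P)); split => //.
  by rewrite -(monicMr _ (monicXsubC r)) hE.
have mapXr : map_poly toC ('X - r%:P) = 'X - (toC r)%:P.
  by rewrite rmorphB /= map_polyX map_polyC.
have hC : map_poly toC (f %/ ('X - r%:P)) = \prod_(j < m) ('X - (x j)%:P).
  apply: (@mulIf _ ('X - (toC r)%:P)); first by rewrite polyXsubC_eq0.
  by rewrite -mapXr -rmorphM hE /= fE mulrC mapXr.
move=> z; rewrite hC /root horner_prod => /prodf_eq0[j _].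
by rewrite hornerXsubC subr_eq0 => /eqP ->.
Qed.

End Factorization.

Section SignPattern.

Variable R : realFieldType.
Implicit Types u w : nat -> R.

Lemma coef_a_rev (f : {poly R}) n (k : nat) :
  size f = n.+1 -> coef_a n f k = coef_rev f k.
Proof.
rewrite /coef_a /coef_rev => ->; case: leqP => k_le /=.
  by rewrite (_ : n%:Z - k%:Z = (n - k)%N) //; lia.
by rewrite coefz_neg //; lia.
Qed.

Lemma persistent_along v w (idx : nat -> nat) :
  nonpos_persistent v -> (forall k : nat, w k = v k) ->
  (forall j, (1 <= j)%N -> idx j.+1 = (idx j).+2) ->
  forall j, (1 <= j)%N -> w (idx j) <= 0 ->
  w (idx j.+1) < 0 \/ forall m, w (idx (j + m.+1)%N) = 0.
Proof.
move=> hv wE idxS j j_ge1; rewrite !wE => vj_le0.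
have idxD m : idx (j + m)%N = (idx j + 2 * m)%N.
  elim: m => [|m IHm]; first by rewrite addn0; lia.
  by rewrite addnS idxS ?IHm; lia.
case: (hv _ _ vj_le0) => // [vj2_lt0|v_tail]; [left | right => m].
  by rewrite idxS // (_ : ((idx j).+2 : int) = (idx j)%:Z + 2) //; lia.
rewrite wE idxD (_ : ((idx j + 2 * m.+1)%N : int) = (idx j)%:Z + 2 * m%:Z + 2).
  exact: v_tail.
by lia.
Qed.

Lemma neg_after_nonpos u t s :
  (forall j, (1 <= j)%N -> u j <= 0 -> u j.+1 < 0 \/ forall m, u (j + m.+1)%N = 0) ->
  u t != 0 -> (1 <= s)%N -> u s <= 0 -> forall j, (s < j <= t)%N -> u j < 0.
Proof.
move=> step ut s_ge1 us_le0; elim=> // j IHj /andP[s_le_j j_lt_t].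
have uj_le0 : u j <= 0.
  have [<-|s_neq_j] := eqVneq s j; first exact: us_le0.
  by apply/ltW/IHj; lia.
have j_ge1 : (1 <= j)%N by lia.
case: (step j j_ge1 uj_le0) => // /(_ (t - j.+1)%N).
rewrite (_ : (j + (t - j.+1).+1)%N = t); last by lia.
by move/eqP; rewrite (negbTE ut).
Qed.

Lemma sign_pattern u t :
  (forall j, (1 <= j)%N -> u j <= 0 -> u j.+1 < 0 \/ forall m, u (j + m.+1)%N = 0) ->
  u t != 0 ->
  (forall j : nat, (1 <= j <= t)%N -> 0 < u j)
  \/ exists s : nat, [/\ (1 <= s <= t)%N,
       (forall j : nat, (1 <= j < s)%N -> 0 < u j),
       u s <= 0 &
       (forall j : nat, (s < j <= t)%N -> u j < 0)].
Proof.
move=> step ut.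
have [/existsP[[j j_lt] /andP[/= j_ge1 uj_le0]]|all_pos] :=
  boolP [exists j : 'I_t.+1, (1 <= j)%N && (u j <= 0)]; last first.
  left=> j /andP[j_ge1 j_le_t].
  move/existsPn: all_pos => /(_ (Ordinal (j_le_t : (j < t.+1)%N))).
  by rewrite /= j_ge1 /= -ltNge.
right; have ex : exists j, (1 <= j <= t)%N && (u j <= 0).
  by exists j; rewrite j_ge1 uj_le0 -ltnS j_lt.
case: (ex_minnP ex) => s /andP[/andP[s_ge1 s_le_t] us_le0] s_min.
exists s; split => //; first by rewrite s_ge1.
  move=> i /andP[i_ge1 i_lt_s]; rewrite ltNge; apply/negP => ui_le0.
  have := s_min i; rewrite i_ge1 ui_le0 (ltnW (leq_trans i_lt_s s_le_t)).
  by rewrite leqNgt i_lt_s => /(_ isT).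
exact: neg_after_nonpos.
Qed.

End SignPattern.

Theorem theorem4p1 (R : realType) (n : nat) (f : {poly R})
  (r : R) (x : 'I_n.-1 -> complex R) :
  (1 <= n)%N ->
  f \is monic -> size f = n.+1 ->
  map_poly (real_complex R) f
    = ('X - (real_complex R r)%:P) * \prod_(j < n.-1) ('X - (x j)%:P) ->
  (forall j, complex.Re (x j) <= 0) ->
  (* (i) even-indexed coefficients *)
  (forall t : nat,
     coef_a n f (2 * t) != 0 ->
     (forall m : nat, (t < m)%N -> coef_a n f (2 * m) = 0) ->
     (forall j : nat, (1 <= j <= t)%N -> 0 < coef_a n f (2 * j))
     \/ exists s : nat, [/\ (1 <= s <= t)%N,
          (forall j : nat, (1 <= j < s)%N -> 0 < coef_a n f (2 * j)),
          coef_a n f (2 * s) <= 0 &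
          (forall j : nat, (s < j <= t)%N -> coef_a n f (2 * j) < 0)])
  /\
  (* (ii) odd-indexed coefficients *)
  (forall t' : nat, (1 <= t')%N ->
     coef_a n f (2 * t' - 1) != 0 ->
     (forall m : nat, (t' < m)%N -> coef_a n f (2 * m - 1) = 0) ->
     (forall j : nat, (1 <= j <= t')%N -> 0 < coef_a n f (2 * j - 1))
     \/ exists s' : nat, [/\ (1 <= s' <= t')%N,
          (forall j : nat, (1 <= j < s')%N -> 0 < coef_a n f (2 * j - 1)),
          coef_a n f (2 * s' - 1) <= 0 &
          (forall j : nat, (s' < j <= t')%N -> coef_a n f (2 * j - 1) < 0)]).
Proof.
(* 1 <= n is implied by the factorization of f. *)
move=> _ f_monic f_size f_factor x_Re.
have [h [fE h_monic h_roots]] := real_root_cofactor f_monic f_factor x_Re.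
have [H [K [hE hH hK]]] := hurwitz_times_imaginary_factor h_monic h_roots.
have f_persistent : nonpos_persistent (coef_rev f).
  rewrite fE hE mulrAC; apply: nonpos_persistent_mul_imaginary hK _ _.
    by rewrite mulf_neq0 ?polyXsubC_eq0 ?hurwitz_coefs_neq0.
  exact: nonpos_persistent_mulXsubC.
have coef_aE k : coef_a n f k = coef_rev f k := coef_a_rev k f_size.
(* Only a_(2t) != 0 (resp. a_(2t'-1) != 0) is used, not the maximality of t. *)
split=> [t | t _] ut _.
  apply: (sign_pattern (u := fun j => coef_a n f (2 * j))) ut => j.
  apply: (persistent_along (idx := fun j => 2 * j)%N) f_persistent coef_aE _ j.
  by move=> i _; lia.
apply: (sign_pattern (u := fun j => coef_a n f (2 * j - 1))) ut => j.
apply: (persistent_along (idx := fun j => 2 * j - 1)%N) f_persistent coef_aE _ j.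
by move=> i i_ge1; lia.
Qed.
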